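(* Let $\lambda,\sigma_1,\sigma_2\in\mathbb{C}^*$ and $\eta_1,\eta_2\in\mathbb{C}$. Write $\Omega(\lambda,\eta_1,\sigma_1,0)=\mathbb{C}[X,Y]$ and $\Omega(\lambda,\eta_2,\sigma_2,0)=\mathbb{C}[X_1,Y_1]$, and let $W=\mathrm{span}\{\sum_{t=0}^{j}\binom{j}{t}X^iY^{j-t}\otimes X_1^kY_1^t\mid i,j,k\in\mathbb{N}\}$, a nonzero proper subspace of $\Omega(\lambda,\eta_1,\sigma_1,0)\otimes\Omega(\lambda,\eta_2,\sigma_2,0)$. Then $W$ is a nonzero proper $\mathcal{G}$-submodule of $\Omega(\lambda,\eta_1,\sigma_1,0)\otimes\Omega(\lambda,\eta_2,\sigma_2,0)$.
   Context: The planar Galilean conformal algebra $\mathcal{G}$ is the complex Lie algebra with basis $\{L_m,H_m,I_m,J_m\mid m\in\mathbb{Z}\}$ and brackets $[L_m,L_n]=(n-m)L_{m+n}$, $[L_m,H_n]=nH_{m+n}$, $[L_m,I_n]=(n-m)I_{m+n}$, $[L_m,J_n]=(n-m)J_{m+n}$, $[H_m,I_n]=I_{m+n}$, $[H_m,J_n]=-J_{m+n}$, and $[H_m,H_n]=[I_m,I_n]=[J_m,J_n]=[I_m,J_n]=0$ for all $m,n\in\mathbb{Z}$. For $\lambda,\sigma\in\mathbb{C}^*$, $\eta\in\mathbb{C}$, the module $\Omega(\lambda,\eta,\sigma,0)$ is a polynomial algebra in two variables $X,Y$ with $L_m f(X,Y)=\lambda^m(Y-mX+m\eta)f(X,Y-m)$,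 $H_m f(X,Y)=\lambda^m X f(X,Y-m)$, $I_m f(X,Y)=\lambda^m\sigma f(X-1,Y-m)$, $J_m f(X,Y)=0$. The tensor product has action $x(v\otimes w)=xv\otimes w+v\otimes xw$. $\mathbb{N}$ denotes non-negative integers. *)

From HB Require Import structures.
From mathcomp Require Import all_boot all_order all_algebra.
From mathcomp Require Import mpoly complex.
From mathcomp Require Import Rstruct.
From Stdlib Require Import Rdefinitions.
Set Implicit Arguments. Unset Strict Implicit. Unset Printing Implicit Defensive.
Import Order.TTheory GRing.Theory Num.Theory.
Local Open Scope ring_scope.

Notation CC := (complex Rdefinitions.R).

(* Basis of the planar Galilean conformal algebra G. *)
Inductive gbasis := gL of int | gH of int | gI of int | gJ of int.

(* The tensor product C[X,Y] (x) C[X1,Y1] is identified with C[X,Y,X1,Y1]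
   = {mpoly CC[4]}, with f(X,Y) (x) g(X1,Y1) |-> f(X,Y) g(X1,Y1).
   Variables: 0 = X, 1 = Y, 2 = X1, 3 = Y1. *)
Notation T4 := {mpoly CC[4]}.
Definition vX  : T4 := 'X_(@inord 3 0).
Definition vY  : T4 := 'X_(@inord 3 1).
Definition vX1 : T4 := 'X_(@inord 3 2).
Definition vY1 : T4 := 'X_(@inord 3 3).

Definition shift4 (a b c d : CC) (F : T4) : T4 :=
  F \mPo [tuple vX + a%:MP; vY + b%:MP; vX1 + c%:MP; vY1 + d%:MP].

(* Action of G on Omega(lam,eta1,sig1,0) (x) Omega(lam,eta2,sig2,0):
   x(v (x) w) = xv (x) w + v (x) xw, where on Omega(lam,eta,sig,0)
   L_m f = lam^m (Y - mX + m eta) f(X,Y-m), H_m f = lam^m X f(X,Y-m),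
   I_m f = lam^m sig f(X-1,Y-m), J_m f = 0. *)
Definition tens_act (lam eta1 sig1 eta2 sig2 : CC) (x : gbasis) (F : T4) : T4 :=
  match x with
  | gL m => (lam ^ m) *: ((vY - m%:~R *: vX + (m%:~R * eta1)%:MP) * shift4 0 (- m%:~R) 0 0 F
                        + (vY1 - m%:~R *: vX1 + (m%:~R * eta2)%:MP) * shift4 0 0 0 (- m%:~R) F)
  | gH m => (lam ^ m) *: (vX * shift4 0 (- m%:~R) 0 0 F + vX1 * shift4 0 0 0 (- m%:~R) F)
  | gI m => (lam ^ m) *: (sig1 *: shift4 (-1) (- m%:~R) 0 0 F
                        + sig2 *: shift4 0 0 (-1) (- m%:~R) F)
  | gJ m => 0
  end.

Definition wgen (i j k : nat) : T4 :=
  \sum_(t < j.+1) 'C(j, t)%:R *: (vX ^+ i * vY ^+ (j - t) * (vX1 ^+ k * vY1 ^+ t)).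

Definition inW (F : T4) : Prop :=
  exists s : seq (CC * (nat * nat * nat)),
    F = \sum_(p <- s) p.1 *: wgen p.2.1.1 p.2.1.2 p.2.2.

Definition is_submodule (act : gbasis -> T4 -> T4) (P : T4 -> Prop) : Prop :=
  [/\ P 0,
      (forall F G, P F -> P G -> P (F + G)),
      (forall (c : CC) F, P F -> P (c *: F)) &
      (forall x F, P F -> P (act x F))].

From HB Require Import structures.
From mathcomp Require Import all_boot all_order all_algebra.
From mathcomp Require Import mpoly complex Rstruct.
From mathcomp Require Import ring.
Import GRing.Theory.
Local Open Scope ring_scope.

(* By the binomial theorem the spanning vectors are [X^i X1^k (Y + Y1)^j], so
   W is the subalgebra C[X, X1, Y + Y1].  It contains the coefficients
   [X], [X1], [Y + Y1 - m X - m X1 + m (eta1 + eta2)] of the action and is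
   stable under translations of the variables; moreover, on W the translations
   [Y -> Y - m] and [Y1 -> Y1 - m] coincide, so the two summands of [L_m F] and
   of [H_m F] recombine into a product of elements of W.  W is proper because
   the linear form [F |-> F(0,1,0,0) - F(0,0,0,1)] vanishes on it but not on Y. *)

Lemma wgenE i j k : wgen i j k = vX ^+ i * vX1 ^+ k * (vY + vY1) ^+ j.
Proof.
rewrite /wgen exprDn mulr_sumr; apply: eq_bigr => t _.
by rewrite scaler_nat mulrnAr mulrACA.
Qed.

Lemma wgenM i j k i' j' k' :
  wgen i j k * wgen i' j' k' = wgen (i + i') (j + j') (k + k').
Proof. by rewrite !wgenE !exprD; ring. Qed.

Lemma inW0 : inW 0.
Proof. by exists [::]; rewrite big_nil. Qed.

Lemma inWD F G : inW F -> inW G -> inW (F + G).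
Proof. by move=> [s ->] [s' ->]; exists (s ++ s'); rewrite big_cat. Qed.

Lemma inWZ c F : inW F -> inW (c *: F).
Proof.
move=> [s ->]; exists [seq (c * p.1, p.2) | p <- s].
by rewrite big_map scaler_sumr; apply: eq_bigr => p _; rewrite scalerA.
Qed.

Lemma inWB F G : inW F -> inW G -> inW (F - G).
Proof. by move=> WF WG; rewrite -scaleN1r; apply/inWD/inWZ. Qed.

Lemma inW_wgen i j k : inW (wgen i j k).
Proof. by exists [:: (1, (i, j, k))]; rewrite big_seq1 scale1r. Qed.

Lemma inW_ind (P : T4 -> Prop) :
  (forall F G, P F -> P G -> P (F + G)) -> (forall c F, P F -> P (c *: F)) ->
  (forall i j k, P (wgen i j k)) -> forall F, inW F -> P F.
Proof.
move=> PD PZ Pw F [s ->]; elim: s => [|p s IH].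
  by rewrite big_nil -(scale0r (wgen 0 0 0)); apply/PZ/Pw.
by rewrite big_cons; apply/PD/IH/PZ/Pw.
Qed.

Lemma inWM F G : inW F -> inW G -> inW (F * G).
Proof.
move=> WF WG; elim/inW_ind: WF => [F1 F2 ? ? | c F1 ? | i j k].
- by rewrite mulrDl; apply: inWD.
- by rewrite -scalerAl; apply: inWZ.
elim/inW_ind: WG => [G1 G2 ? ? | c G1 ? | i' j' k'].
- by rewrite mulrDr; apply: inWD.
- by rewrite -scalerAr; apply: inWZ.
by rewrite wgenM; apply: inW_wgen.
Qed.

Lemma inW1 : inW 1.
Proof. by have := inW_wgen 0 0 0; rewrite wgenE !expr0 !mulr1. Qed.

Lemma inWX n F : inW F -> inW (F ^+ n).
Proof.
move=> WF; elim: n => [|n IH]; first by rewrite expr0; apply: inW1.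
by rewrite exprS; apply: inWM.
Qed.

Lemma inWC c : inW c%:MP.
Proof. by rewrite -alg_mpolyC; apply/inWZ/inW1. Qed.

Lemma inW_vX : inW vX.
Proof. by have := inW_wgen 1 0 0; rewrite wgenE !expr0 expr1 !mulr1. Qed.

Lemma inW_vX1 : inW vX1.
Proof. by have := inW_wgen 0 0 1; rewrite wgenE !expr0 expr1 mulr1 mul1r. Qed.

Lemma inW_vYY1 : inW (vY + vY1).
Proof. by have := inW_wgen 0 1 0; rewrite wgenE !expr0 expr1 !mul1r. Qed.

Section Translations.

Variables a b c d : CC.

Lemma shift4D F G :
  shift4 a b c d (F + G) = shift4 a b c d F + shift4 a b c d G.
Proof. exact: comp_mpolyD. Qed.

Lemma shift4Z e F : shift4 a b c d (e *: F) = e *: shift4 a b c d F.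
Proof. exact: comp_mpolyZ. Qed.

Lemma shift4_wgen i j k : shift4 a b c d (wgen i j k) =
  (vX + a%:MP) ^+ i * (vX1 + c%:MP) ^+ k * (vY + vY1 + (b + d)%:MP) ^+ j.
Proof.
rewrite wgenE /shift4 !rmorphM !rmorphXn rmorphD /=.
rewrite /vX /vY /vX1 /vY1 !comp_mpolyXU.
by rewrite !inordK; [rewrite /= mpolyCD; congr (_ * _ ^+ _); ring | by [] ..].
Qed.

Lemma inW_shift4 F : inW F -> inW (shift4 a b c d F).
Proof.
elim/inW_ind => [F1 F2 ? ? | e F1 ? | i j k].
- by rewrite shift4D; apply: inWD.
- by rewrite shift4Z; apply: inWZ.
rewrite shift4_wgen; apply/inWM/inWX; last exact/inWD/inWC/inW_vYY1.
by apply/inWM/inWX/inWD/inWC; [apply/inWX/inWD/inWC/inW_vX | apply: inW_vX1].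
Qed.

End Translations.

Lemma shift4_Y_Y1 m F : inW F -> shift4 0 m 0 0 F = shift4 0 0 0 m F.
Proof.
elim/inW_ind => [F1 F2 eq1 eq2 | e F1 eq1 | i j k].
- by rewrite !shift4D eq1 eq2.
- by rewrite !shift4Z eq1.
by rewrite !shift4_wgen [m + 0]addr0 [0 + m]add0r.
Qed.

Lemma inW_tens_act lam eta1 sig1 eta2 sig2 x F :
  inW F -> inW (tens_act lam eta1 sig1 eta2 sig2 x F).
Proof.
move=> WF; case: x => m /=; last exact: inW0.
- rewrite shift4_Y_Y1; last by [].
  rewrite -mulrDl; apply/inWZ/inWM; last exact: inW_shift4.
  have -> : vY - m%:~R *: vX + (m%:~R * eta1)%:MP
             + (vY1 - m%:~R *: vX1 + (m%:~R * eta2)%:MP)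
           = (vY + vY1) - m%:~R *: vX - m%:~R *: vX1
             + (m%:~R * (eta1 + eta2))%:MP.
    by rewrite mulrDr mpolyCD; ring.
  by apply/inWD/inWC/inWB/inWZ/inW_vX1/inWB/inWZ/inW_vX/inW_vYY1.
- rewrite shift4_Y_Y1; last by [].
  by rewrite -mulrDl; apply/inWZ/inWM/inW_shift4/WF/inWD/inW_vX1/inW_vX.
- by apply/inWZ/inWD; apply/inWZ/inW_shift4.
Qed.

Definition unit4 (n : nat) : 'I_4 -> CC :=
  fun i => if nat_of_ord i == n then 1 else 0.

Definition evalY_sub_evalY1 (F : T4) : CC := F.@[unit4 1] - F.@[unit4 3].

Lemma evalY_sub_evalY1_W F : inW F -> evalY_sub_evalY1 F = 0.
Proof.
rewrite /evalY_sub_evalY1; elim/inW_ind => [F1 F2 | e F1 | i j k].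
- by rewrite !mevalD opprD addrACA => -> ->; rewrite addr0.
- by rewrite !mevalZ -mulrBr => ->; rewrite mulr0.
rewrite wgenE !rmorphM !rmorphXn /= !mevalD /vX /vY /vX1 /vY1 !mevalXU /unit4.
by rewrite !inordK //= addr0 add0r subrr.
Qed.

Lemma vY_notin_W : ~ inW vY.
Proof.
move=> /evalY_sub_evalY1_W; rewrite /evalY_sub_evalY1 /vY !mevalXU /unit4.
by rewrite !inordK //= subr0 => /eqP; rewrite oner_eq0.
Qed.

Theorem proposition4p4 (lam sig1 sig2 eta1 eta2 : CC) :
  lam != 0 -> sig1 != 0 -> sig2 != 0 ->
  is_submodule (tens_act lam eta1 sig1 eta2 sig2) inW /\
  (exists F, inW F /\ F != 0) /\ (exists F, ~ inW F).
Proof.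
move=> _ _ _; split; last split.
- by split; [exact: inW0 | exact: inWD | exact: inWZ | exact: inW_tens_act].
- by exists 1; split; [exact: inW1 | exact: oner_neq0].
- by exists vY; exact: vY_notin_W.
Qed.
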